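(* Let $m,n,t\in\mathbf{Z}$ with $\gcd(m,n)=1$ satisfy $$t=\frac{-3(m^{3}+3m^{2}n-6mn^{2}+4n^{3})(m^{3}+3m^{2}n+3mn^{2}+4n^{3})(5m^{3}-3m^{2}n-3mn^{2}+2n^{3})}{(m^{3}-3mn^{2}+n^{3})^{3}}.$$ Then $m^{3}-3mn^{2}+n^{3}=\pm1$ or $m^{3}-3mn^{2}+n^{3}=\pm3$. *)

From mathcomp Require Import all_boot all_order all_algebra.
Set Implicit Arguments. Unset Strict Implicit. Unset Printing Implicit Defensive.

From mathcomp Require Import all_boot all_order all_algebra.
From mathcomp Require Import ring.
Set Implicit Arguments. Unset Strict Implicit. Unset Printing Implicit Defensive.
Import GRing.Theory Num.Theory.
Local Open Scope ring_scope.

(* Let d be the denominator cubic form and a, b, c the numerator ones.  The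
   resultant of d and each of a, b, c is +-3^5; explicitly, for each of
   them, say a, there are quadratic forms with u d + v a = 9 m^5 and
   u' d + v' a = 9 n^5.  Hence a prime p <> 3 dividing d and a divides m and
   n, which coprimality excludes.  As d^3 divides -3abc, every prime factor
   of d is 3.  Finally 9 does not divide d: 3 | d forces n = -m mod 3, and
   then d = -3 m^3 mod 9.  So |d| is 1 or 3. *)

Definition denom (m n : int) := m ^+ 3 - 3 * m * n ^+ 2 + n ^+ 3.
Definition numer1 (m n : int) := m ^+ 3 + 3 * m ^+ 2 * n - 6 * m * n ^+ 2 + 4 * n ^+ 3.
Definition numer2 (m n : int) := m ^+ 3 + 3 * m ^+ 2 * n + 3 * m * n ^+ 2 + 4 * n ^+ 3.
Definition numer3 (m n : int) := 5 * m ^+ 3 - 3 * m ^+ 2 * n - 3 * m * n ^+ 2 + 2 * n ^+ 3.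

Lemma Euclid_dvdzM (p : nat) (x y : int) : prime p ->
  (p%:Z %| x * y)%Z = (p%:Z %| x)%Z || (p%:Z %| y)%Z.
Proof. by move=> p_pr; rewrite !dvdzE abszM Euclid_dvdM. Qed.

Lemma Euclid_dvdzX (p k : nat) (x : int) : prime p ->
  (p%:Z %| x ^+ k)%Z = (p%:Z %| x)%Z && (0 < k)%N.
Proof. by move=> p_pr; rewrite !dvdzE abszX Euclid_dvdX. Qed.

Lemma coprimez_prime_dvd (p : nat) (x y : int) : coprimez x y -> prime p ->
  (p%:Z %| x)%Z -> (p%:Z %| y)%Z -> False.
Proof.
move=> /eqP xy1 p_pr px py.
have : (p%:Z %| gcdz x y)%Z by rewrite dvdz_gcd px py.
by rewrite xy1 dvdzE dvdn1 /= => /eqP p1; rewrite p1 in p_pr.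
Qed.

Lemma prime_dvd_common_combination (p k : nat) (x y c d f u v u' v' : int) :
  coprimez x y -> prime p ->
  u * d + v * f = c * x ^+ k -> u' * d + v' * f = c * y ^+ k ->
  (p%:Z %| d)%Z -> (p%:Z %| f)%Z -> (p%:Z %| c)%Z.
Proof.
move=> xy p_pr ex ey pd pf.
have pcx : (p%:Z %| c * x ^+ k)%Z by rewrite -ex rpredD // dvdz_mull.
have pcy : (p%:Z %| c * y ^+ k)%Z by rewrite -ey rpredD // dvdz_mull.
rewrite Euclid_dvdzM // Euclid_dvdzX // in pcx.
rewrite Euclid_dvdzM // Euclid_dvdzX // in pcy.
case/orP: pcx => [// | /andP [px _]]; case/orP: pcy => [// | /andP [py _]].
by case: (coprimez_prime_dvd xy p_pr px py).
Qed.

Lemma prime_dvdz9 (p : nat) : prime p -> (p%:Z %| 9)%Z -> p = 3%N.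
Proof.
move=> p_pr; rewrite dvdzE (Euclid_dvdM 3 3 p_pr) orbb.
by rewrite (dvdn_prime2 p_pr) // => /eqP.
Qed.

Section CommonPrimeFactors.

Variables (m n : int) (p : nat).
Hypotheses (mn : coprimez m n) (p_pr : prime p) (p_d : (p%:Z %| denom m n)%Z).

Lemma prime_dvd_denom_numer1 : (p%:Z %| numer1 m n)%Z -> p = 3%N.
Proof.
move=> p_a; apply/prime_dvdz9 => //.
apply: (prime_dvd_common_combination (x := m) (y := n) (c := 9) (k := 5)
  (u := 7 * m ^+ 2 - 14 * m * n + 12 * n ^+ 2) (v := 2 * m ^+ 2 + 8 * m * n - 3 * n ^+ 2)
  (u' := m ^+ 2 + 3 * m * n - 7 * n ^+ 2) (v' := - m ^+ 2 + 4 * n ^+ 2) mn p_pr _ _ p_d p_a);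
  by rewrite /denom /numer1; ring.
Qed.

Lemma prime_dvd_denom_numer2 : (p%:Z %| numer2 m n)%Z -> p = 3%N.
Proof.
move=> p_b; apply/prime_dvdz9 => //.
apply: (prime_dvd_common_combination (x := m) (y := n) (c := 9) (k := 5)
  (u := 20 * m ^+ 2 + 9 * m * n + 28 * n ^+ 2) (v := - 11 * m ^+ 2 + 24 * m * n - 7 * n ^+ 2)
  (u' := m * n + n ^+ 2) (v' := - m * n + 2 * n ^+ 2) mn p_pr _ _ p_d p_b);
  by rewrite /denom /numer2; ring.
Qed.

Lemma prime_dvd_denom_numer3 : (p%:Z %| numer3 m n)%Z -> p = 3%N.
Proof.
move=> p_c; apply/prime_dvdz9 => //.
apply: (prime_dvd_common_combination (x := m) (y := n) (c := 9) (k := 5)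
  (u := - 6 * m ^+ 2 - m * n + 2 * n ^+ 2) (v := 3 * m ^+ 2 + 2 * m * n - n ^+ 2)
  (u' := 20 * m ^+ 2 - 7 * m * n - 15 * n ^+ 2) (v' := - 4 * m ^+ 2 - m * n + 12 * n ^+ 2) mn p_pr _ _ p_d p_c);
  by rewrite /denom /numer3; ring.
Qed.

End CommonPrimeFactors.

Lemma prime_dvd_denom (m n : int) (p : nat) : coprimez m n -> prime p ->
  (p%:Z %| denom m n)%Z -> (p%:Z %| - 3 * numer1 m n * numer2 m n * numer3 m n)%Z ->
  p = 3%N.
Proof.
move=> mn p_pr p_d; rewrite !Euclid_dvdzM //.
case/orP=> [/orP [/orP [p_3 | p_a] | p_b] | p_c].
- by move: p_3; rewrite rpredN dvdzE (dvdn_prime2 p_pr (isT : prime 3)) => /eqP.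
- exact: prime_dvd_denom_numer1 mn p_pr p_d p_a.
- exact: prime_dvd_denom_numer2 mn p_pr p_d p_b.
- exact: prime_dvd_denom_numer3 mn p_pr p_d p_c.
Qed.

Lemma cube_dvdz3 (x : int) : (3 %| x ^+ 3)%Z -> (3 %| x)%Z.
Proof. by rewrite (Euclid_dvdzX _ _ (isT : prime 3)) andbT. Qed.

Lemma denom_not_dvdz9 (m n : int) : coprimez m n -> ~~ (9 %| denom m n)%Z.
Proof.
move=> mn; apply/negP => d9.
have d3 : (3 %| denom m n)%Z by apply: dvdz_trans d9; apply/dvdzP; exists 3.
have : (3 %| (m + n) ^+ 3)%Z.
  have -> : (m + n) ^+ 3 = denom m n + 3 * (m ^+ 2 * n + 2 * m * n ^+ 2).
    by rewrite /denom; ring.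
  by rewrite rpredD // dvdz_mulr.
move=> /cube_dvdz3 /dvdzP [k mnk].
have en : n = k * 3 - m by rewrite -mnk; ring.
have : (3 * 3 %| 3 * m ^+ 3)%Z.
  have -> : 3 * m ^+ 3 = 3 * 3 * (3 * m ^+ 2 * k - 6 * m * k ^+ 2 + 3 * k ^+ 3) - denom m n.
    by rewrite /denom en; ring.
  by rewrite rpredB // dvdz_mulr.
rewrite dvdz_mul2l // => /cube_dvdz3 m3.
have n3 : (3 %| n)%Z by rewrite en rpredB // dvdz_mull.
exact: coprimez_prime_dvd mn (isT : prime 3) m3 n3.
Qed.

Lemma pnat3_not_dvdn9 (d : nat) : (3.-nat d)%N -> ~~ (9 %| d)%N -> d = 1%N \/ d = 3%N.
Proof.
case/p_natP=> k ->; rewrite -[9%N]/(3 ^ 2)%N dvdn_Pexp2l // -ltnNge.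
by case: k => [|[|]]; [left | right |].
Qed.

Lemma absz_eq (x : int) (k : nat) : `|x|%N = k -> x = k%:Z \/ x = - k%:Z.
Proof. by case: x => l /= <-; [left | right; rewrite NegzE]. Qed.

Theorem lemma5p1 (m n t : int) :
  gcdz m n = 1%N ->
  (t%:~R : rat) =
    ((-3) * (m^+3 + 3* m ^+2* n - 6* m * n ^+2 + 4* n ^+3)
          * (m^+3 + 3* m ^+2* n + 3* m * n ^+2 + 4* n ^+3)
          * (5* m ^+3 - 3* m ^+2* n - 3* m * n ^+2 + 2* n ^+3))%:~R
    / ((m^+3 - 3* m * n ^+2 + n^+3) ^+ 3)%:~R ->
  (m^+3 - 3* m * n ^+2 + n^+3 = 1 \/ m^+3 - 3* m * n ^+2 + n^+3 = -1 \/
   m^+3 - 3* m * n ^+2 + n^+3 = 3 \/ m^+3 - 3* m * n ^+2 + n^+3 = -3).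
Proof.
move=> /eqP mn ht.
rewrite -/(denom m n) -/(numer1 m n) -/(numer2 m n) -/(numer3 m n) in ht *.
set d := denom m n in ht *.
have d9 : ~~ (9 %| d)%Z := denom_not_dvdz9 mn.
have d_nz : d != 0 by apply: contraNneq d9 => ->; rewrite dvdz0.
have t_d3 : t * d ^+ 3 = - 3 * numer1 m n * numer2 m n * numer3 m n.
  by apply: (@intr_inj rat); rewrite rmorphM /= ht divfK // intr_eq0 expf_neq0.
have d_3nat : (3.-nat `|d|)%N.
  apply/pnatP=> [|p p_pr p_d]; first by rewrite absz_gt0.
  apply/eqP; apply: prime_dvd_denom mn p_pr _ _; first by rewrite dvdzE.
  by rewrite -t_d3 dvdz_mull // dvdz_exp // dvdzE.
by case: (pnat3_not_dvdn9 d_3nat d9) => /absz_eq [] ->; tauto.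
Qed.
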